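(* For any $X$-free ordered graph $(H,\prec)$, the graph $H$ contains no subdivision of $B_4$ as an induced subgraph.
   Context: An ordered graph is a pair $(H,\prec)$ with $H$ a finite graph and $\prec$ a linear order on $V(H)$. $X$ denotes the ordered graph on vertices $a\prec b\prec c\prec d$ with edge set exactly $\{ac,bd\}$; an ordered graph is $X$-free if no four of its vertices induce (with the restricted order) a copy of $X$. $B_4$ is the graph on vertices $s,t,x_1,x_2,x_3,y_1,y_2,y_3,z_1,z_2,z_3$ formed by the three internally disjoint paths $s x_1 x_2 x_3 t$, $s y_1 y_2 y_3 t$, $s z_1 z_2 z_3 t$ (each with $4$ edges) and no other edges. A subdivision of a graph $F$ is a graph obtained from $F$ by replacing edges of $F$ with internally disjoint paths between their ends. *)

From mathcomp Require Import all_boot.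
Set Implicit Arguments. Unset Strict Implicit. Unset Printing Implicit Defensive.

Definition simple_graph (T : finType) (e : rel T) : Prop :=
  symmetric e /\ irreflexive e.

Definition strict_linear_order (T : finType) (lt : rel T) : Prop :=
  [/\ irreflexive lt, transitive lt & forall x y, x != y -> lt x y || lt y x].

Definition X_free (T : finType) (e : rel T) (lt : rel T) : Prop :=
  ~ exists a b c d : T,
      [&& lt a b, lt b c, lt c d, e a c, e b d,
          ~~ e a b, ~~ e a d, ~~ e b c & ~~ e c d].

Definition consec (T : eqType) (s : seq T) (x y : T) : Prop :=
  exists i, i.+1 < size s /\ nth x s i = x /\ nth x s i.+1 = y.

(* The vertex x of H lies in the subdivision given by branch map phi and
   internal-vertex lists Q (Q u v = internal vertices of the path replacing uv). *)
Definition in_subdiv (V T : finType) (fe : rel V) (phi : V -> T)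
  (Q : V -> V -> seq T) (x : T) : Prop :=
  (exists w, x = phi w) \/ (exists u v, fe u v /\ x \in Q u v).

Definition induced_subdivision (V : finType) (fe : rel V)
  (T : finType) (e : rel T) : Prop :=
  exists (phi : V -> T) (Q : V -> V -> seq T),
  [/\ injective phi,
      (forall u v, fe u v -> Q v u = rev (Q u v)),
      (forall u v, fe u v ->
         [/\ path e (phi u) (rcons (Q u v) (phi v)),
             uniq (phi u :: rcons (Q u v) (phi v)) &
             forall x w, x \in Q u v -> x != phi w]),
      (forall u v u' v', fe u v -> fe u' v' -> forall x,
          x \in Q u v -> x \in Q u' v' ->
          (u' = u /\ v' = v) \/ (u' = v /\ v' = u)) &
      (forall x y, in_subdiv fe phi Q x -> in_subdiv fe phi Q y -> e x y ->
          exists u v, fe u v /\ consec (phi u :: rcons (Q u v) (phi v)) x y)].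

(* B_4 on 'I_11: s = 0, t = 1, x1 x2 x3 = 2 3 4, y1 y2 y3 = 5 6 7,
   z1 z2 z3 = 8 9 10; paths s x1 x2 x3 t, s y1 y2 y3 t, s z1 z2 z3 t. *)
Definition B4_edges : seq (nat * nat) :=
  [:: (0,2); (2,3); (3,4); (4,1);
      (0,5); (5,6); (6,7); (7,1);
      (0,8); (8,9); (9,10); (10,1)].

Definition B4_adj : rel 'I_11 :=
  fun i j => (((i : nat), (j : nat)) \in B4_edges) || (((j : nat), (i : nat)) \in B4_edges).

(* Write [between x w y] when w lies strictly between x and y in the order, and call a vertex
   w of an induced subgraph far from an edge xy when it is distinct from and non-adjacent to
   both x and y. X-freeness says exactly that betweenness cannot change along an edge of far
   vertices, so in an induced theta graph whose three paths have length at least 4 all far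
   vertices of an edge lie on the same side of it; call the edge crossed when they lie
   inside. Two crossed edges far from each other are impossible: the endpoints of each would
   lie inside the interval of the other. An order argument on the three neighbours of s and
   their successors yields a crossed edge among the first two edges of some path, and
   likewise near t. On different paths these two edges are far apart; on a common path they
   leave the two other paths without crossed edges, which a last order argument rules out.
   An induced subdivision of B4 is such a theta graph. *)

From mathcomp Require Import all_boot zify.
From Stdlib Require Import Classical.
Set Implicit Arguments. Unset Strict Implicit. Unset Printing Implicit Defensive.

Lemma discrete_ivt (T : Type) (l : rel T) (f : nat -> T) r k1 k2 :
  (forall a b, a <> b -> l a b \/ l b a) -> (forall a b, l a b -> l b a -> False) ->
  k1 <= k2 -> (forall j, k1 <= j <= k2 -> f j <> r) -> l (f k1) r -> l r (f k2) ->
  exists2 j, k1 <= j < k2 & l (f j) r /\ l r (f j.+1).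
Proof.
move=> tot asym; elim: k2 => [|k2 IH] hk hne l1 l2.
  have Ek : k1 = 0 by lia.
  by rewrite Ek in l1; case: (asym _ _ l1 l2).
case: (leqP k1 k2) => [hk2 | hk2]; last first.
  have Ek : k1 = k2.+1 by lia.
  by rewrite Ek in l1; case: (asym _ _ l1 l2).
have [fr | rf] := tot _ _ (hne k2 ltac:(lia)).
  by exists k2 => //; lia.
by case: IH => // [j hj|j hj lj]; [apply: hne; lia | exists j => //; lia].
Qed.

Section OrderedGraph.
Variables (T : finType) (e lt : rel T).
Hypotheses (esym : symmetric e) (eirr : irreflexive e).
Hypotheses (lt_irr : irreflexive lt) (lt_tr : transitive lt).
Hypothesis lt_tot : forall x y, x != y -> lt x y || lt y x.
Hypothesis Xfree : X_free e lt.

Definition between x w y := (lt x w && lt w y) || (lt y w && lt w x).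

Lemma betweenC x w y : between x w y = between y w x.
Proof. by rewrite /between orbC. Qed.

Lemma lt_asym x y : lt x y -> lt y x -> False.
Proof. by move=> xy yx; have := lt_tr xy yx; rewrite lt_irr. Qed.

Lemma lt_total x y : x <> y -> lt x y \/ lt y x.
Proof. by move/eqP/lt_tot/orP. Qed.

Lemma X_free_contra a b c d : lt a b -> lt b c -> lt c d -> e a c -> e b d ->
  ~~ e a b -> ~~ e a d -> ~~ e b c -> ~~ e c d -> False.
Proof.
move=> ab bc cd ac bd nab nad nbc ncd; apply: Xfree; exists a, b, c, d.
by rewrite ab bc cd ac bd nab nad nbc ncd.
Qed.

Lemma between_crossing (f : nat -> T) r k1 k2 : k1 <= k2 ->
  (forall j, k1 <= j <= k2 -> f j <> r) -> between (f k1) r (f k2) ->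
  exists2 j, k1 <= j < k2 & between (f j) r (f j.+1).
Proof.
move=> hk hne /orP[]/andP[l1 l2].
- have [||j hj [a b]] := discrete_ivt (l := lt) _ _ hk hne l1 l2.
  + exact: lt_total.
  + exact: lt_asym.
  + by exists j; rewrite // /between a b.
- have [||j hj [a b]] := discrete_ivt (l := fun a b => lt b a) _ _ hk hne l2 l1.
  + by move=> a b /lt_total[]; auto.
  + by move=> a b /lt_asym.
  + by exists j; rewrite // /between a b orbT.
Qed.

Lemma between_outer_contra x y u v :
  between x u y -> between x v y -> between u x v -> False.
Proof.
rewrite /between.
case/orP=> /andP[h1 h2]; case/orP=> /andP[h3 h4]; case/orP=> /andP[h5 h6].
all: first [ exact: lt_asym h1 h5 | exact: lt_asym h3 h5 | exact: lt_asym h6 h4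
  | exact: lt_asym h6 h2 | exact: lt_asym h5 h1 | exact: lt_asym h5 h3
  | exact: lt_asym h4 h6 | exact: lt_asym h2 h6
  | exact: lt_asym (lt_tr h1 h2) (lt_tr h3 h4) ].
Qed.

Section Far.
Variable V : T -> Prop.

Definition far x y w := [/\ V w, w <> x, w <> y, ~~ e x w & ~~ e y w].

Definition crossed x y := exists w, far x y w /\ between x w y.

Definition same_side x y :=
  forall w w', far x y w -> far x y w' -> between x w y = between x w' y.

Lemma farC x y w : far x y w <-> far y x w.
Proof. by split; case=> *; split. Qed.

Lemma crossedC x y : crossed x y <-> crossed y x.
Proof. by split; case=> w [/farC fw bw]; exists w; rewrite betweenC. Qed.

(* The two ways of leaving the interval (x, y) along uv both produce an X. *)
Lemma between_edge_lt x y u v : lt x y -> e x y -> e u v -> far x y u -> far x y v ->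
  between x u y -> between x v y.
Proof.
move=> xy exy euv [_ ux uy nxu nyu] [_ vx vy nxv nyv].
case/orP=> [/andP[xu uy'] | /andP[yu ux']]; last by case: (lt_asym xy (lt_tr yu ux')).
have uv : u <> v by move=> E; subst; rewrite eirr in euv.
apply/negPn/negP; rewrite negb_or => /andP[nxvy nyvx].
case: (lt_total vx) => [vlx | xlv].
  by apply: (X_free_contra vlx xu uy' _ exy); rewrite // esym.
have ylv : lt y v.
  by case: (lt_total (nesym vy)) => // vly; move: nxvy; rewrite xlv vly.
by apply: (X_free_contra xu uy' ylv exy euv); rewrite // esym.
Qed.

Lemma between_edge x y u v : e x y -> e u v -> far x y u -> far x y v ->
  between x u y = between x v y.
Proof.
have step x' y' u' v' : e x' y' -> e u' v' -> far x' y' u' -> far x' y' v' ->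
    between x' u' y' -> between x' v' y'.
  move=> exy euv fu fv.
  have xy : x' <> y' by move=> E; subst; rewrite eirr in exy.
  case: (lt_total xy) => [lxy | lyx]; first exact: between_edge_lt.
  rewrite betweenC (betweenC x'); apply: between_edge_lt => //; try exact/farC.
  by rewrite esym.
move=> exy euv fu fv; apply/idP/idP; first exact: step.
by apply: step => //; rewrite esym.
Qed.

Lemma between_path_const (f : nat -> T) x y k1 k2 : e x y -> k1 <= k2 ->
  (forall j, k1 <= j < k2 -> e (f j) (f j.+1)) ->
  (forall j, k1 <= j <= k2 -> far x y (f j)) ->
  between x (f k1) y = between x (f k2) y.
Proof.
move=> exy; elim: k2 => [|k2 IH] hk epath fpath; first by case: k1 hk {epath fpath}.
case: (leqP k1 k2) => [hk2 | hk2]; last by rewrite (_ : k1 = k2.+1) //; lia.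
rewrite IH //; last 2 first.
- by move=> j hj; apply: epath; lia.
- by move=> j hj; apply: fpath; lia.
by apply: between_edge => //; [apply: epath | apply: fpath | apply: fpath]; lia.
Qed.

Lemma crossed_far_edges_contra x y u v : same_side x y -> same_side u v ->
  crossed x y -> crossed u v ->
  far x y u -> far x y v -> far u v x -> far u v y -> False.
Proof.
move=> Sxy Suv [w [fw bw]] [w' [fw' bw']] fu fv fx fy.
by apply: (@between_outer_contra x y u v); [rewrite (Sxy u w) | rewrite (Sxy v w)
  | rewrite (Suv x w')].
Qed.

Lemma uncrossed_order a c a' c' : ~ crossed a c -> ~ crossed a' c' ->
  far a' c' a -> far a c a' -> far a c c' -> lt a a' -> lt a c' /\ lt c a'.
Proof.
move=> nC nC' fa fa' fc' aa'; split.
- have ac' : a <> c' by case: fc' => _ /nesym.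
  case: (lt_total ac') => // c'a.
  by case: nC'; exists a; split; rewrite // /between c'a aa' orbT.
- have ca' : c <> a' by case: fa' => _ _ /nesym.
  case: (lt_total ca') => // a'c.
  by case: nC; exists a'; split; rewrite // /between aa' a'c.
Qed.

(* Were none of these edges crossed, take a q the middle one of the a p in the order: c q
   would lie strictly between the two other a p, hence inside one of the edges from z to them. *)
Lemma spider_crossed z (a c : nat -> T) :
  (forall p q, p < 3 -> q < 3 -> p <> q ->
     [/\ far (a q) (c q) (a p), far (a q) (c q) (c p) & far z (a p) (c q)]) ->
  exists2 m, m < 3 & crossed z (a m) \/ crossed (a m) (c m).
Proof.
move=> H; apply: NNPP => nH.
have nCz m : m < 3 -> ~ crossed z (a m) by move=> hm C; apply: nH; exists m; auto.
have nCa m : m < 3 -> ~ crossed (a m) (c m) by move=> hm C; apply: nH; exists m; auto.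
have no_middle p q r : p < 3 -> q < 3 -> r < 3 -> p <> q -> q <> r ->
    lt (a p) (a q) -> lt (a q) (a r) -> False.
  move=> hp hq hr pq qr apq aqr.
  have [fpq1 _ fpq3] := H p q hp hq pq.
  have [fqp1 fqp2 _] := H q p hq hp (nesym pq).
  have [fqr1 _ _] := H q r hq hr qr.
  have [frq1 frq2 frq3] := H r q hr hq (nesym qr).
  have [apcq _] := uncrossed_order (nCa p hp) (nCa q hq) fpq1 fqp1 fqp2 apq.
  have [_ cqar] := uncrossed_order (nCa q hq) (nCa r hr) fqr1 frq1 frq2 aqr.
  have zcq : z <> c q by case: fpq3 => _ /nesym.
  case: (lt_total zcq) => [zcq' | cqz].
  - by apply: (nCz r hr); exists (c q); split; rewrite // /between zcq' cqar.
  - by apply: (nCz p hp); exists (c q); split; rewrite // /between apcq cqz orbT.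
have neq p q : p < 3 -> q < 3 -> p <> q -> a p <> a q.
  by move=> hp hq pq; case: (H p q hp hq pq) => -[].
case: (lt_total (neq 0 1 erefl erefl ltac:(done))) => h01;
case: (lt_total (neq 0 2 erefl erefl ltac:(done))) => h02;
case: (lt_total (neq 1 2 erefl erefl ltac:(done))) => h12.
all: first [ exact: (no_middle 0 1 2) | exact: (no_middle 0 2 1)
  | exact: (no_middle 1 0 2) | exact: (no_middle 1 2 0) | exact: (no_middle 2 0 1)
  | exact: (no_middle 2 1 0) | exact: lt_asym (lt_tr h01 h12) h02
  | exact: lt_asym (lt_tr h12 h01) h02 ].
Qed.

End Far.

Definition same_index (n : nat -> nat) m k m' k' :=
  (m = m' /\ k = k') \/ (k = 0 /\ k' = 0) \/ (k = n m /\ k' = n m').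

(* Branch m of the theta is the path pos m 0, ..., pos m (n m) from s = pos 0 0 to
   t = pos 0 (n 0); apart from these three paths the subgraph has no edges. *)
Record long_induced_theta (pos : nat -> nat -> T) (n : nat -> nat) : Prop := {
  theta_len : forall m, m < 3 -> 4 <= n m;
  theta_s : forall m, m < 3 -> pos m 0 = pos 0 0;
  theta_t : forall m, m < 3 -> pos m (n m) = pos 0 (n 0);
  theta_path : forall m k, m < 3 -> k < n m -> e (pos m k) (pos m k.+1);
  theta_inj : forall m m' k k', m < 3 -> m' < 3 -> k <= n m -> k' <= n m' ->
    pos m k = pos m' k' -> same_index n m k m' k';
  theta_induced : forall m m' k k', m < 3 -> m' < 3 -> k <= n m -> k' <= n m' ->
    e (pos m k) (pos m' k') -> exists i j, [/\ i < 3, j < n i &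
      (pos m k = pos i j /\ pos m' k' = pos i j.+1) \/
      (pos m k = pos i j.+1 /\ pos m' k' = pos i j)] }.

Section Theta.
Variables (pos : nat -> nat -> T) (n : nat -> nat).
Hypothesis theta : long_induced_theta pos n.
Let n_ge4 := theta_len theta.
Let pos_s := theta_s theta.
Let pos_t := theta_t theta.
Let pos_path := theta_path theta.
Let pos_inj := theta_inj theta.

Definition theta_vertex x := exists m k, [/\ m < 3, k <= n m & x = pos m k].

Local Notation far := (far theta_vertex).
Local Notation crossed := (crossed theta_vertex).
Local Notation same_side := (same_side theta_vertex).

Lemma theta_vertex_pos m k : m < 3 -> k <= n m -> theta_vertex (pos m k).
Proof. by move=> hm hk; exists m, k. Qed.

Lemma pos_eq_same i j j' : i < 3 -> j <= n i -> j' <= n i -> pos i j = pos i j' -> j = j'.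
Proof. by move=> hi hj hj' /(pos_inj hi hi hj hj') [[_ ->] | [[-> ->] | [-> ->]]]. Qed.

Lemma pos_eq_interior m j i j' : m < 3 -> i < 3 -> 0 < j < n m -> j' <= n i ->
  pos m j = pos i j' -> i = m /\ j' = j.
Proof.
move=> hm hi /andP[j0 jn] hj' /(pos_inj hm hi (ltnW jn) hj').
by case=> [[-> ->] // | [[j0' _] | [jn' _]]]; [rewrite j0' in j0 | rewrite jn' ltnn in jn].
Qed.

Lemma pos_interior_neq m j i j' : m < 3 -> i < 3 -> m <> i -> 0 < j < n m -> j' <= n i ->
  pos m j <> pos i j'.
Proof. by move=> hm hi mi hj hj' /(pos_eq_interior hm hi hj hj') [im _]; case: mi. Qed.

Lemma pos_adj_interior m j m' k : m < 3 -> m' < 3 -> 0 < j < n m -> k <= n m' ->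
  e (pos m j) (pos m' k) ->
  (m' = m /\ (k = j.+1 \/ j = k.+1)) \/ (j = 1 /\ k = 0) \/ (j.+1 = n m /\ k = n m').
Proof.
move=> hm hm' hj hk; have jn : j <= n m by case/andP: hj => _ /ltnW.
case/(theta_induced theta hm hm' jn hk) => i [j0 [hi hj0 [[E1 E2] | [E1 E2]]]].
- have [Ei Ej] := pos_eq_interior hm hi hj (ltnW hj0) E1; subst i j0.
  by case: (pos_inj hm' hm hk hj0 E2) => [[-> ->] | [[_ //] | [-> ->]]]; auto.
- have [Ei Ej] := pos_eq_interior hm hi hj hj0 E1; subst i j.
  case: (pos_inj hm' hm hk (ltnW hj0) E2) => [[-> ->] | [[-> ->] | [_ E]]]; auto.
  by move: hj0; rewrite E ltnn.
Qed.

Lemma pos_st_nonadj i : i < 3 -> ~~ e (pos i 0) (pos i (n i)).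
Proof.
move=> hi; have := n_ge4 hi => hn.
apply/negP => /(theta_induced theta hi hi (leq0n _) (leqnn _)) [m [j [hm hj E]]].
case: E => [[E1 E2] | [E1 _]].
- have j0 : j = 0 by case: (pos_inj hi hm (leq0n _) (ltnW hj) E1) => [[_ <-] | [[] | []]] //; lia.
  have := n_ge4 hm; subst j.
  by case: (pos_inj hi hm (leqnn _) hj E2) => [[_ E] | [[E _] | [_ E]]]; lia.
- by case: (pos_inj hi hm (leq0n _) hj E1) => [[_ E] | [[_ E] | [E _]]]; lia.
Qed.

Lemma pos_adj_same i j j' : i < 3 -> j <= n i -> j' <= n i ->
  e (pos i j) (pos i j') -> j' = j.+1 \/ j = j'.+1.
Proof.
move=> hi hj hj'.
have interior a b : 0 < a < n i -> b <= n i -> e (pos i a) (pos i b) -> b = a.+1 \/ a = b.+1.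
  by move=> ha hb /(pos_adj_interior hi hi ha hb) [[_ //] | [[-> ->] | [<- ->]]]; auto.
case: (boolP (0 < j < n i)) => [hj0 | hj0]; first exact: interior.
case: (boolP (0 < j' < n i)) => [hj0' E | hj0'].
  by rewrite esym in E; case: (interior _ _ hj0' hj E); auto.
have ends a : a <= n i -> ~~ (0 < a < n i) -> a = 0 \/ a = n i by lia.
case: (ends _ hj hj0) => ->; case: (ends _ hj' hj0') => ->; rewrite ?eirr //.
- by rewrite (negbTE (pos_st_nonadj hi)).
- by rewrite esym (negbTE (pos_st_nonadj hi)).
Qed.

Lemma far_pos_same i k0 j : i < 3 -> k0 < n i -> j <= n i ->
  far (pos i k0) (pos i k0.+1) (pos i j) <-> j.+2 <= k0 \/ k0.+3 <= j.
Proof.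
move=> hi hk hj; split.
- case=> _ n1 n2 a1 a2.
  case: (leqP j.+2 k0) => [|h1]; first by left.
  case: (leqP k0.+3 j) => [|h2]; first by right.
  have : (j.+1 = k0 \/ j = k0) \/ (j = k0.+1 \/ j = k0.+2) by lia.
  case=> [[E | E] | [E | E]]; subst.
  + by case/negP: a1; rewrite esym; apply: pos_path => //; lia.
  + by case: n1.
  + by case: n2.
  + by case/negP: a2; apply: pos_path.
- move=> H; split.
  + exact: theta_vertex_pos.
  + by move/(pos_eq_same hi hj (ltnW hk)); lia.
  + by move/(pos_eq_same hi hj hk); lia.
  + by apply/negP => /(pos_adj_same hi (ltnW hk) hj); lia.
  + by apply/negP => /(pos_adj_same hi hk hj); lia.
Qed.

Lemma far_pos_interior i k0 m j : i < 3 -> m < 3 -> m <> i -> k0 < n i -> 0 < j < n m ->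
  far (pos i k0) (pos i k0.+1) (pos m j) <-> (j = 1 -> 0 < k0) /\ (j.+1 = n m -> k0.+1 < n i).
Proof.
move=> hi hm mi hk hj; have jn : j <= n m by case/andP: hj => _ /ltnW.
split.
- case=> _ _ _ a1 a2; split=> [j1 | jn1].
  + subst j; case: k0 hk a1 a2 => // hk a1 _.
    by case/negP: a1; rewrite (pos_s hi) -(pos_s hm); apply: pos_path.
  + rewrite ltn_neqAle hk andbT; apply: contraNneq a2 => Ek.
    rewrite Ek (pos_t hi) -(pos_t hm) -jn1 esym; apply: pos_path => //; lia.
- case=> h1 h2; split.
  + exact: theta_vertex_pos.
  + by apply: pos_interior_neq => //; apply: ltnW.
  + exact: pos_interior_neq.
  + apply/negP; rewrite esym => /(pos_adj_interior hm hi hj (ltnW hk)).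
    case=> [[im _] | [[j1 Ek] | [_ E]]]; first by case: mi.
      by move: (h1 j1); rewrite Ek.
    by move: hk; rewrite E ltnn.
  + apply/negP; rewrite esym => /(pos_adj_interior hm hi hj hk).
    case=> [[im _] | [[_ //] | [j1 E]]]; first by case: mi.
    by move: (h2 j1); rewrite E ltnn.
Qed.

Lemma far_pos_other i k0 m j : i < 3 -> m < 3 -> m <> i -> k0 < n i -> j <= n m ->
  (j = 0 -> 2 <= k0) -> (j = 1 -> 1 <= k0) -> (j = n m -> k0.+2 < n i) ->
  (j.+1 = n m -> k0.+1 < n i) -> far (pos i k0) (pos i k0.+1) (pos m j).
Proof.
move=> hi hm mi hk hj h0 h1 hn hn1.
case: (posnP j) => [j0 | jpos].
  have := h0 j0; rewrite j0 pos_s // -(pos_s hi) => k2.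
  by apply/far_pos_same => //; lia.
case: (ltngtP j (n m)) => [jn | jn | jn].
- have hj' : 0 < j < n m by rewrite jpos jn.
  by apply/far_pos_interior => //; split.
- by move: hj; rewrite leqNgt jn.
- have := hn jn; rewrite jn pos_t // -(pos_t hi) => k2.
  by apply/far_pos_same => //; lia.
Qed.

Lemma other_branches m : m < 3 ->
  exists j k, [/\ j < 3, k < 3, j <> m, k <> m & j <> k].
Proof. by case: m => [|[|[|]]] // _; [exists 1, 2 | exists 0, 2 | exists 0, 1]. Qed.

Lemma between_branch x y m j1 j2 : e x y -> m < 3 ->
  (forall j, j1 <= j <= j2 -> far x y (pos m j)) -> j1 <= j2 -> j2 <= n m ->
  between x (pos m j1) y = between x (pos m j2) y.
Proof.
move=> exy hm hf h12 h2; apply: (between_path_const (V := theta_vertex)) => //.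
by move=> j hj; apply: pos_path => //; lia.
Qed.

Ltac far_other := apply: far_pos_other => //; lia.

(* A far vertex is joined by a path of far vertices to t when t is far, and to s otherwise. *)
Lemma far_side i k0 w : i < 3 -> k0 < n i -> far (pos i k0) (pos i k0.+1) w ->
  between (pos i k0) w (pos i k0.+1) =
  between (pos i k0) (if k0.+2 < n i then pos 0 (n 0) else pos 0 0) (pos i k0.+1).
Proof.
move=> hi hk0 fw; have exy := pos_path hi hk0; have := n_ge4 hi => lni.
have [m [k [hm hk Ew]]] : theta_vertex w by case: fw.
have [[k' hk' Ek] | [mi hkm]] :
    (exists2 k', k' <= n i & w = pos i k') \/ (m <> i /\ 0 < k < n m).
  case: (eqVneq m i) => [Em | /eqP mi]; first by left; exists k; rewrite -Em.
  case: (posnP k) => [Ek | kpos].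
    by left; exists 0; rewrite // Ew Ek (pos_s hm) (pos_s hi).
  case: (ltngtP k (n m)) => [kn | kn | kn]; first by right; split; rewrite // kpos kn.
    by move: hk; rewrite leqNgt kn.
  by left; exists (n i); rewrite // Ew kn (pos_t hm) (pos_t hi).
- rewrite Ek in fw *; move/(far_pos_same hi hk0 hk'): fw => fw.
  have far_i j1 j2 : (j2.+2 <= k0 \/ k0.+3 <= j1) -> j2 <= n i ->
      forall j, j1 <= j <= j2 -> far (pos i k0) (pos i k0.+1) (pos i j).
    by move=> hfar hj2 j hj; apply/far_pos_same; lia.
  case: ifP => hc; case: fw => fw; last by lia.
  + have [m' [_ [hm' _ m'i _ _]]] := other_branches hi.
    have := n_ge4 hm' => lnm'.
    rewrite -(between_branch exy hi (far_i 0 k' _ _)) //; try lia.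
    rewrite pos_s // -(pos_s hm') (between_branch (j1 := 0) (j2 := n m') exy hm') ?pos_t //.
    by move=> j hj; far_other.
  + by rewrite (between_branch exy hi (far_i k' (n i) _ _)) ?pos_t //; lia.
  + by rewrite -(between_branch exy hi (far_i 0 k' _ _)) ?pos_s //; lia.
- rewrite Ew in fw *; have := n_ge4 hm => lnm.
  move/(far_pos_interior hi hm mi hk0 hkm): fw => [f1 f2].
  have far_m j1 j2 : (j1 = 0 -> 2 <= k0) -> (j1 <= 1 -> 1 <= k0) ->
      (j2 = n m -> k0.+2 < n i) -> (n m <= j2.+1 -> k0.+1 < n i) -> j2 <= n m ->
      forall j, j1 <= j <= j2 -> far (pos i k0) (pos i k0.+1) (pos m j).
    by move=> h1 h2 h3 h4 hj2 j hj; far_other.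
  case: ifP => hc.
  + by rewrite (between_branch exy hm (far_m k (n m) _ _ _ _ _)) ?pos_t //; lia.
  + by rewrite -(between_branch exy hm (far_m 0 k _ _ _ _ _)) ?pos_s //; lia.
Qed.

Lemma same_side_pos i k0 : i < 3 -> k0 < n i -> same_side (pos i k0) (pos i k0.+1).
Proof. by move=> hi hk w w' fw fw'; rewrite (far_side hi hk fw) (far_side hi hk fw'). Qed.

Definition uncrossed_branch i := forall q, q < n i -> ~ crossed (pos i q) (pos i q.+1).

Lemma uncrossed_branch_not_between j k : j < 3 -> k < 3 -> j <> k ->
  uncrossed_branch j -> ~~ between (pos j 1) (pos k 1) (pos j (n j).-1).
Proof.
move=> hj hk jk Uj; have := n_ge4 hj; have := n_ge4 hk => lk lj.
apply/negP => B.
case: (between_crossing (f := pos j) (k1 := 1) (k2 := (n j).-1) _ _ B) => [|q hq|q hq bq].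
- lia.
- by apply: pos_interior_neq => //; lia.
- by apply: (Uj q); [lia | exists (pos k 1); split=> //; far_other].
Qed.

(* As no edge of branch j or k is crossed, pos j 1 < pos k 1 forces pos j (n j - 1) < s and
   pos j 1 < t; then s or t lies inside the last or the first edge of branch j. *)
Lemma uncrossed_branches_lt j k : j < 3 -> k < 3 -> j <> k ->
  uncrossed_branch j -> uncrossed_branch k -> lt (pos j 1) (pos k 1) -> False.
Proof.
move=> hj hk jk Uj Uk ljk; have := n_ge4 hj; have := n_ge4 hk => lk lj.
have kj : k <> j by apply: nesym.
have Ej : (n j).-1.+1 = n j by lia.
have Ek : (n k).-1.+1 = n k by lia.
have lj' : lt (pos j (n j).-1) (pos k 1).
  have ne : pos j (n j).-1 <> pos k 1 by apply: pos_interior_neq => //; lia.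
  case: (lt_total ne) => // h.
  by move: (uncrossed_branch_not_between hj hk jk Uj); rewrite /between ljk h.
have lk' : lt (pos j 1) (pos k (n k).-1).
  have ne : pos j 1 <> pos k (n k).-1 by apply: pos_interior_neq => //; lia.
  case: (lt_total ne) => // h.
  by move: (uncrossed_branch_not_between hk hj kj Uk); rewrite /between ljk h orbT.
have ljs : lt (pos j (n j).-1) (pos 0 0).
  have f : far (pos k 0) (pos k 1) (pos j (n j).-1) by far_other.
  have ne : pos j (n j).-1 <> pos k 0 by case: f.
  rewrite -(pos_s hk); case: (lt_total ne) => // h.
  by case: (Uk 0); [lia | exists (pos j (n j).-1); split; rewrite // /between h lj'].
have ljt : lt (pos j 1) (pos 0 (n 0)).
  have f : far (pos k (n k).-1) (pos k (n k).-1.+1) (pos j 1) by far_other.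
  rewrite Ek in f; have ne : pos j 1 <> pos k (n k) by case: f.
  rewrite -(pos_t hk); case: (lt_total ne) => // h.
  case: (Uk (n k).-1); first lia.
  by exists (pos j 1); rewrite Ek; split; rewrite // /between h lk' orbT.
have st : pos 0 0 <> pos 0 (n 0).
  by rewrite -(pos_s hj) -(pos_t hj) => /pos_eq_same; lia.
case: (lt_total st) => h.
- case: (Uj (n j).-1); first lia.
  exists (pos j 0); split; first by apply/far_pos_same; lia.
  by rewrite Ej /between pos_s // pos_t // ljs h.
- case: (Uj 0); first lia.
  exists (pos j (n j)); split; first by apply/far_pos_same; lia.
  by rewrite /between pos_s // pos_t // ljt h orbT.
Qed.

Lemma uncrossed_branches_contra j k : j < 3 -> k < 3 -> j <> k ->
  uncrossed_branch j -> uncrossed_branch k -> False.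
Proof.
move=> hj hk jk Uj Uk.
have := n_ge4 hj; have := n_ge4 hk => lk lj.
have ne : pos j 1 <> pos k 1 by apply: pos_interior_neq => //; lia.
case: (lt_total ne) => h; first exact: (uncrossed_branches_lt hj hk jk Uj Uk h).
exact: (uncrossed_branches_lt hk hj (nesym jk) Uk Uj h).
Qed.

Lemma crossed_near_s :
  exists m k, [/\ m < 3, k <= 1 & crossed (pos m k) (pos m k.+1)].
Proof.
case: (spider_crossed (V := theta_vertex) (z := pos 0 0) (a := fun m => pos m 1)
  (c := fun m => pos m 2)) => [p q hp hq pq /= | m hm [C | C]].
- have := n_ge4 hp; have := n_ge4 hq => lq lp.
  by split; [far_other | far_other | rewrite -(pos_s hp); far_other].
- by exists m, 0; rewrite pos_s.
- by exists m, 1.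
Qed.

Lemma crossed_near_t :
  exists m k, [/\ m < 3, (n m).-2 <= k < n m & crossed (pos m k) (pos m k.+1)].
Proof.
case: (spider_crossed (V := theta_vertex) (z := pos 0 (n 0))
  (a := fun m => pos m (n m).-1) (c := fun m => pos m (n m).-2)) => [p q hp hq pq /= | m hm C].
- have := n_ge4 hp; have := n_ge4 hq => lq lp.
  have -> : (n q).-1 = (n q).-2.+1 by lia.
  have -> : (n p).-1 = (n p).-2.+1 by lia.
  rewrite -(pos_t hp) (_ : n p = (n p).-2.+2); last by lia.
  by split; apply/farC; far_other.
- have := n_ge4 hm => lm.
  have Em : (n m).-1.+1 = n m by lia.
  case: C => C.
  + exists m, (n m).-1; split=> //; first lia.
    by apply/crossedC; rewrite Em pos_t.
  + exists m, (n m).-2; split=> //; first lia.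
    by apply/crossedC; rewrite (_ : (n m).-2.+1 = (n m).-1) //; lia.
Qed.

(* An edge among the first two of a branch and one among the last two of another branch are
   far from each other. *)
Lemma no_long_induced_theta : False.
Proof.
have [m1 [k1 [hm1 hk1 C1]]] := crossed_near_s.
have [m2 [k2 [hm2 hk2 C2]]] := crossed_near_t.
have := n_ge4 hm1; have := n_ge4 hm2 => l2 l1.
have far_contra i q j r : i < 3 -> j < 3 -> i <> j -> q < n i -> r < n j ->
    crossed (pos i q) (pos i q.+1) -> crossed (pos j r) (pos j r.+1) ->
    q.+2 < n i -> 1 < r -> False.
  move=> hi hj ij hq hr Ci Cj hq2 hr2; have := n_ge4 hi; have := n_ge4 hj => lj li.
  apply: (crossed_far_edges_contra (same_side_pos hi hq) (same_side_pos hj hr) Ci Cj);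
    far_other.
case: (eqVneq m1 m2) => [E | /eqP ne]; last first.
  by apply: (far_contra m1 k1 m2 k2) => //; lia.
subst m2.
have [j [k [hj hk jm km jk]]] := other_branches hm1.
have uncrossed i : i < 3 -> i <> m1 -> uncrossed_branch i.
  move=> hi im q hq Cq; have := n_ge4 hi => li.
  case: (leqP 2 q) => hq2.
  - by apply: (far_contra m1 k1 i q) => //; lia.
  - by apply: (far_contra i q m1 k2) => //; lia.
exact: (uncrossed_branches_contra hj hk jk (uncrossed j hj jm) (uncrossed k hk km)).
Qed.

End Theta.

End OrderedGraph.

Lemma consec_infix (T : eqType) (s1 s2 : seq T) x y :
  infix s1 s2 -> consec s1 x y -> consec s2 x y.
Proof.
case/infixP=> [p [q ->]] [i [hi [hx hy]]]; exists (size p + i).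
have nth_mid j : j < size s1 -> nth x (p ++ s1 ++ q) (size p + j) = nth x s1 j.
  by move=> hj; rewrite nth_cat ltnNge leq_addr addKn /= nth_cat hj.
rewrite -addnS !nth_mid ?hx ?hy ?size_cat //; try lia.
by split=> //; lia.
Qed.

Lemma consec_rev (T : eqType) (s : seq T) x y : consec (rev s) x y -> consec s y x.
Proof.
rewrite /consec size_rev => -[i [hi [hx hy]]]; exists (size s - i.+2).
rewrite nth_rev in hx; last lia.
rewrite nth_rev in hy; last lia.
rewrite (_ : (size s - i.+2).+1 = size s - i.+1); last lia.
rewrite !(set_nth_default x) ?hx ?hy; try lia.
by split=> //; lia.
Qed.

Section Subdivision.
Variables (V : finType) (fe : rel V) (s t : V) (branch : nat -> seq V).
Hypotheses (fe_sym : symmetric fe) (fe_irr : irreflexive fe) (st_nonadj : ~~ fe s t).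
Hypothesis branch_path : forall m, m < 3 -> path fe s (branch m).
Hypothesis branch_uniq : forall m, m < 3 -> uniq (s :: branch m).
Hypothesis branch_last : forall m, m < 3 -> last s (branch m) = t.
Hypothesis branch_size : forall m, m < 3 -> 4 <= size (branch m).
Hypothesis branch_meet : forall m m' u, m < 3 -> m' < 3 -> m <> m' ->
  u \in s :: branch m -> u \in s :: branch m' -> u = s \/ u = t.
Hypothesis edge_on_branch : forall u v, fe u v -> exists2 m, m < 3 &
  ((u, v) \in zip (s :: branch m) (branch m)) || ((v, u) \in zip (s :: branch m) (branch m)).

Variables (T : finType) (e : rel T) (phi : V -> T) (Q : V -> V -> seq T).
Hypothesis phi_inj : injective phi.
Hypothesis Q_rev : forall u v, fe u v -> Q v u = rev (Q u v).
Hypothesis Q_path : forall u v, fe u v ->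
  [/\ path e (phi u) (rcons (Q u v) (phi v)), uniq (phi u :: rcons (Q u v) (phi v)) &
      forall x w, x \in Q u v -> x != phi w].
Hypothesis Q_disjoint : forall u v u' v', fe u v -> fe u' v' -> forall x,
  x \in Q u v -> x \in Q u' v' -> (u' = u /\ v' = v) \/ (u' = v /\ v' = u).
Hypothesis Q_induced : forall x y, in_subdiv fe phi Q x -> in_subdiv fe phi Q y -> e x y ->
  exists u v, fe u v /\ consec (phi u :: rcons (Q u v) (phi v)) x y.

(* The image in H of the walk w :: l of F, without its first vertex phi w. *)
Fixpoint expand (w : V) (l : seq V) : seq T :=
  if l is w' :: l' then Q w w' ++ phi w' :: expand w' l' else [::].

Lemma size_expand w l : size l <= size (expand w l).
Proof. by elim: l w => [|w' l IH] w //=; rewrite size_cat /=; have := IH w'; lia. Qed.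

Lemma last_expand w l : last (phi w) (expand w l) = phi (last w l).
Proof. by elim: l w => [|w' l IH] w //=; rewrite last_cat /= IH. Qed.

Lemma expand_path w l : path fe w l -> path e (phi w) (expand w l).
Proof.
elim: l w => [|w' l IH] w //= /andP[fww' P].
have [Pww' _ _] := Q_path fww'.
by rewrite -cat_rcons cat_path Pww' last_rcons IH.
Qed.

Lemma mem_expand w l x : path fe w l -> x \in phi w :: expand w l ->
  (exists2 v, v \in w :: l & x = phi v) \/
  (exists u v, [/\ fe u v, u \in w :: l, v \in l & x \in Q u v]).
Proof.
elim: l w => [|w' l IH] w /=.
  by rewrite inE => _ /eqP ->; left; exists w; rewrite ?inE.
case/andP=> fww' P; rewrite in_cons mem_cat => /or3P[/eqP -> | xQ | xr].
- by left; exists w; rewrite ?inE ?eqxx.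
- by right; exists w, w'; rewrite !inE !eqxx ?orbT.
- case: (IH w' P xr) => [[v hv ->] | [u [v [fuv hu hv xQ]]]].
  + by left; exists v; rewrite // inE hv orbT.
  + by right; exists u, v; split; rewrite // inE ?hu ?hv orbT.
Qed.

Lemma expand_uniq w l : uniq (w :: l) -> path fe w l -> uniq (phi w :: expand w l).
Proof.
elim: l w => [|w' l IH] w // /andP[wl U] /andP[fww' P].
have [_ UQ Qphi] := Q_path fww'.
rewrite [expand _ _]/= cons_uniq mem_cat negb_or cat_uniq IH // andbT -andbA.
apply/and4P; split.
- by apply/negP => /(Qphi _ w); rewrite eqxx.
- apply/negP => /(mem_expand P) [[v hv /phi_inj E] | [u [v [fuv _ _ wQ]]]].
    by rewrite E hv in wl.
  by have [_ _ /(_ _ w wQ)] := Q_path fuv; rewrite eqxx.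
- by move: UQ; rewrite cons_uniq rcons_uniq => /andP[_ /andP[]].
- apply/hasPn => y /(mem_expand P) [[v _ ->] | [u [v [fuv hu hv yQ]]]].
    by apply/negP => /(Qphi _ v); rewrite eqxx.
  apply/negP => yQ'; case: (Q_disjoint fww' fuv yQ' yQ) => -[Eu Ev]; subst.
  + by rewrite hu in wl.
  + by rewrite inE hv orbT in wl.
Qed.

Lemma subdiv_path_infix w l u v : (u, v) \in zip (w :: l) l ->
  infix (phi u :: rcons (Q u v) (phi v)) (phi w :: expand w l).
Proof.
elim: l w => [//|w' l IH] w; rewrite [zip _ _]/= in_cons => /orP[/eqP[-> ->] | uv].
  by rewrite [expand _ _]/= -cat_rcons -cat_cons prefix_infix.
by apply: infix_trans (IH w' uv) _; rewrite [expand _ _]/= -cat_cons suffix_infix.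
Qed.

Definition branch_image m := phi s :: expand s (branch m).
Definition branch_pos m k := nth (phi s) (branch_image m) k.
Definition branch_len m := size (expand s (branch m)).

Lemma branch_len_ge4 m : m < 3 -> 4 <= branch_len m.
Proof. by move=> hm; apply: leq_trans (branch_size hm) (size_expand _ _). Qed.

Lemma branch_pos_t m : m < 3 -> branch_pos m (branch_len m) = phi t.
Proof.
move=> hm; rewrite /branch_pos (_ : branch_len m = (size (branch_image m)).-1) //.
by rewrite nth_last /= last_expand branch_last.
Qed.

Lemma branch_pos_path m k : m < 3 -> k < branch_len m ->
  e (branch_pos m k) (branch_pos m k.+1).
Proof. by move=> hm hk; apply: (pathP _ (expand_path (branch_path hm))). Qed.

Lemma mem_branch_pos m k : k <= branch_len m -> branch_pos m k \in branch_image m.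
Proof. by move=> hk; apply: mem_nth. Qed.

Lemma branch_pos_inj_same m k k' : m < 3 -> k <= branch_len m -> k' <= branch_len m ->
  branch_pos m k = branch_pos m k' -> k = k'.
Proof.
move=> hm hk hk' /eqP; rewrite nth_uniq //; first by move/eqP.
exact: expand_uniq (branch_uniq hm) (branch_path hm).
Qed.

Lemma ends_nonadj a b : a = s \/ a = t -> b = s \/ b = t -> ~~ fe a b.
Proof. by case=> -> [] ->; rewrite ?fe_irr // fe_sym. Qed.

Lemma branch_image_meet m m' x : m < 3 -> m' < 3 -> m <> m' ->
  x \in branch_image m -> x \in branch_image m' -> x = phi s \/ x = phi t.
Proof.
move=> hm hm' mm'.
have in_branch w m0 : w \in branch m0 -> w \in s :: branch m0 by rewrite inE => ->; rewrite orbT.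
move=> /(mem_expand (branch_path hm)) [[v hv ->] | [u [v [fuv hu hv xQ]]]]
  /(mem_expand (branch_path hm')) [[v' hv' E] | [u' [v' [fuv' hu' hv' xQ']]]].
- rewrite (phi_inj E) in hv *.
  by case: (branch_meet hm hm' mm' hv hv') => ->; auto.
- by have [_ _ /(_ _ v xQ')] := Q_path fuv'; rewrite eqxx.
- by have [_ _ /(_ _ v' xQ)] := Q_path fuv; rewrite E eqxx.
- exfalso; case: (Q_disjoint fuv fuv' xQ xQ') => -[Eu Ev]; subst u' v'.
  + have Hu := branch_meet hm hm' mm' hu hu'.
    have Hv := branch_meet hm hm' mm' (in_branch _ _ hv) (in_branch _ _ hv').
    by move: fuv; apply/negP/ends_nonadj.
  + have Hu := branch_meet hm hm' mm' hu (in_branch _ _ hv').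
    have Hv := branch_meet hm hm' mm' (in_branch _ _ hv) hu'.
    by move: fuv; apply/negP/ends_nonadj.
Qed.

Lemma branch_pos_inj m m' k k' : m < 3 -> m' < 3 -> k <= branch_len m -> k' <= branch_len m' ->
  branch_pos m k = branch_pos m' k' -> same_index branch_len m k m' k'.
Proof.
move=> hm hm' hk hk' E; case: (eqVneq m m') => [Em | /eqP mm'].
  by subst m'; left; split=> //; apply: branch_pos_inj_same E.
have hx' : branch_pos m k \in branch_image m' by rewrite E mem_branch_pos.
right; case: (branch_image_meet hm hm' mm' (mem_branch_pos hk) hx') => Ex.
- by left; split; [apply: (branch_pos_inj_same hm) | apply: (branch_pos_inj_same hm')];
    rewrite // -?E Ex.
- by right; split; [apply: (branch_pos_inj_same hm) | apply: (branch_pos_inj_same hm')];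
    rewrite // -?E Ex branch_pos_t.
Qed.

Lemma in_subdiv_branch_pos m k : m < 3 -> k <= branch_len m ->
  in_subdiv fe phi Q (branch_pos m k).
Proof.
move=> hm /mem_branch_pos /(mem_expand (branch_path hm)) [[v _ ->] | [u [v [fuv _ _ xQ]]]].
- by left; exists v.
- by right; exists u, v.
Qed.

Lemma consec_branch_image m x y : consec (branch_image m) x y ->
  exists2 j, j < branch_len m & x = branch_pos m j /\ y = branch_pos m j.+1.
Proof.
case=> j [hj [hx hy]]; exists j; first by move: hj; rewrite /= ltnS.
by rewrite /branch_pos !(set_nth_default x) ?hx ?hy // ltnW.
Qed.

Lemma consec_subdiv_branch u v x y : fe u v ->
  consec (phi u :: rcons (Q u v) (phi v)) x y ->
  exists2 m, m < 3 & consec (branch_image m) x y \/ consec (branch_image m) y x.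
Proof.
move=> fuv C; have [m hm /orP[uv | vu]] := edge_on_branch fuv; exists m => //.
  by left; apply: consec_infix (subdiv_path_infix uv) C.
have fvu : fe v u by rewrite fe_sym.
right; apply: consec_infix (subdiv_path_infix vu) _; apply: consec_rev.
by rewrite rev_cons rev_rcons -(Q_rev fvu).
Qed.

Lemma branch_pos_induced m m' k k' : m < 3 -> m' < 3 ->
  k <= branch_len m -> k' <= branch_len m' -> e (branch_pos m k) (branch_pos m' k') ->
  exists i j, [/\ i < 3, j < branch_len i &
    (branch_pos m k = branch_pos i j /\ branch_pos m' k' = branch_pos i j.+1) \/
    (branch_pos m k = branch_pos i j.+1 /\ branch_pos m' k' = branch_pos i j)].
Proof.
move=> hm hm' hk hk'.
move/(Q_induced (in_subdiv_branch_pos hm hk) (in_subdiv_branch_pos hm' hk')).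
case=> u [v [fuv /(consec_subdiv_branch fuv) [i hi [] /consec_branch_image [j hj [-> ->]]]]].
- by exists i, j; split=> //; left.
- by exists i, j; split=> //; right.
Qed.

Lemma subdivision_long_induced_theta : long_induced_theta e branch_pos branch_len.
Proof.
split=> //.
- exact: branch_len_ge4.
- by move=> m hm; rewrite !branch_pos_t.
- exact: branch_pos_path.
- exact: branch_pos_inj.
- exact: branch_pos_induced.
Qed.

End Subdivision.

(* Unlike [inord k], this ordinal reduces by computation, so the facts about B4 below are
   checked by evaluation. *)
Definition B4_vertex (k : nat) : 'I_11 := Ordinal (ltn_pmod k (isT : 0 < 11)).
Definition B4_s := B4_vertex 0.
Definition B4_t := B4_vertex 1.
Definition B4_branch (m : nat) : seq 'I_11 :=
  [seq B4_vertex k | k <- [:: 3 * m + 2; 3 * m + 3; 3 * m + 4; 1]].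

Lemma B4_adj_sym : symmetric B4_adj.
Proof. by move=> u v; rewrite /B4_adj orbC. Qed.

Lemma B4_adj_irr : irreflexive B4_adj.
Proof. by case=> [[|[|[|[|[|[|[|[|[|[|[|]]]]]]]]]]] ?]. Qed.

Lemma B4_st_nonadj : ~~ B4_adj B4_s B4_t.
Proof. by []. Qed.

Lemma B4_branch_path m : m < 3 -> path B4_adj B4_s (B4_branch m).
Proof. by case: m => [|[|[|]]]. Qed.

Lemma B4_branch_uniq m : m < 3 -> uniq (B4_s :: B4_branch m).
Proof. by case: m => [|[|[|]]]. Qed.

Lemma B4_branch_last m : m < 3 -> last B4_s (B4_branch m) = B4_t.
Proof. by []. Qed.

Lemma B4_branch_size m : m < 3 -> 4 <= size (B4_branch m).
Proof. by []. Qed.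

Lemma B4_branch_meet m m' u : m < 3 -> m' < 3 -> m <> m' ->
  u \in B4_s :: B4_branch m -> u \in B4_s :: B4_branch m' -> u = B4_s \/ u = B4_t.
Proof.
move=> hm hm' mm' /(map_f val) hu /(map_f val) hu'.
have : val u <= 1 by move: hu hu'; rewrite /= !inE; lia.
by case: u {hu hu'} => -[|[|]] // ? _; [left | right]; apply: val_inj.
Qed.

Lemma B4_edge_on_branch u v : B4_adj u v -> exists2 m, m < 3 &
  ((u, v) \in zip (B4_s :: B4_branch m) (B4_branch m)) ||
  ((v, u) \in zip (B4_s :: B4_branch m) (B4_branch m)).
Proof.
pose vals (p : 'I_11 * 'I_11) := (val p.1, val p.2).
have vals_inj : injective vals by move=> [a b] [c d] [/val_inj-> /val_inj->].
have edge_step p : vals p \in B4_edges -> exists2 m, m < 3 &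
    p \in zip (B4_s :: B4_branch m) (B4_branch m).
  rewrite (_ : B4_edges = flatten [seq map vals (zip (B4_s :: B4_branch m) (B4_branch m))
    | m <- iota 0 3]) // => /flatten_mapP[m].
  by rewrite mem_iota (mem_map vals_inj) => /andP[_ hm] hp; exists m.
case/orP=> [/(edge_step (u, v)) | /(edge_step (v, u))] [m hm hp];
  by exists m; rewrite // hp ?orbT.
Qed.

Unset Implicit Arguments.

Theorem proposition6p2 (T : finType) (e : rel T) (lt : rel T) :
  simple_graph e -> strict_linear_order lt -> X_free e lt ->
  ~ induced_subdivision B4_adj e.
Proof.
move=> [esym eirr] [lt_irr lt_tr lt_tot] Xf [phi [Q [phi_inj Q_rev Q_path Q_disj Q_ind]]].
apply: (no_long_induced_theta esym eirr lt_irr lt_tr lt_tot Xf).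
exact: (subdivision_long_induced_theta B4_adj_sym B4_adj_irr B4_st_nonadj B4_branch_path
  B4_branch_uniq B4_branch_last B4_branch_size B4_branch_meet B4_edge_on_branch
  phi_inj Q_rev Q_path Q_disj Q_ind).
Qed.
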